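(* Let $B\colon\mathbb R^{2m}\to\mathbb R^{2m}$ be a linear map with no real eigenvalues, and consider the nondegenerate line fibration of $\mathbb R^{2m+1}$ it generates. This fibration corresponds to a (continuous) great circle fibration of $S^{2m+1}$ if and only if $B$ is invariant on planes.
   Context: Write $\mathbb R^{2m+1}=\mathbb R^{2m}\times\mathbb R$; $B$ generates the family of oriented lines $\{(y+tB(y),\,t):t\in\mathbb R\}$, $y\in\mathbb R^{2m}$, which is a smooth nondegenerate line fibration of $\mathbb R^{2m+1}$ since $B$ has no real eigenvalues. Identify $\mathbb R^{2m+1}$ with the hyperplane $\{x_{2m+2}=1\}\subset\mathbb R^{2m+2}$ tangent to $S^{2m+1}$ at the north pole; each line $\ell$ of the fibration determines the great circle $S^{2m+1}\cap\alpha(\ell)$, where $\alpha(\ell)$ is the linear span of $\ell\times\{1\}$. The fibration corresponds to a great circle fibration if there exists a continuous fibration of $S^{2m+1}$ by oriented great circles whose fibers meeting the open upper hemisphere $\{x_{2m+2}>0\}$ are exactly these great circles. A linear map $B$ with no real eigenvalues is invariant on planes if $B^2(u)\in\mathrm{Span}\{u,B(u)\}$ for every nonzero $u\in\mathbb R^{2m}$. *)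

(* Vectors are row vectors 'rV[R]_n,
   a linear map B : R^n -> R^n is a matrix acting on the right: u |-> u *m B. *)
From HB Require Import structures.
From mathcomp Require Import all_boot all_order all_algebra.
From mathcomp Require Import all_classical all_reals all_analysis.
Set Implicit Arguments. Unset Strict Implicit. Unset Printing Implicit Defensive.
Import Order.TTheory GRing.Theory Num.Theory.
Import numFieldNormedType.Exports.
Local Open Scope classical_set_scope.
Local Open Scope ring_scope.

Section GreatCircles.
Variable R : realType.

Definition dotv (N : nat) (u v : 'rV[R]_N) : R := (u *m v^T) 0 0.

Definition sphere (N : nat) : set 'rV[R]_N := [set x | dotv x x = 1].

Definition orthonormal (N : nat) (u v : 'rV[R]_N) : Prop :=
  [/\ dotv u u = 1, dotv v v = 1 & dotv u v = 0].

(* the bivector u /\ v, encoding the oriented 2-plane spanned by (u, v) *)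
Definition bivec (N : nat) (u v : 'rV[R]_N) : 'M[R]_N := u^T *m v - v^T *m u.

(* an oriented great circle of S^{N-1}, encoded by the unit bivector of its
   oriented plane: u /\ v for an orthonormal (positively oriented) pair (u,v) *)
Definition is_ogc (N : nat) (J : 'M[R]_N) : Prop :=
  exists u v : 'rV[R]_N, orthonormal u v /\ J = bivec u v.

Definition ogc_points (N : nat) (J : 'M[R]_N) : set 'rV[R]_N :=
  [set x | exists (u v : 'rV[R]_N) (t : R),
      orthonormal u v /\ J = bivec u v /\ x = cos t *: u + sin t *: v].

(* A continuous fibration of S^{N-1} by oriented great circles, given by the
   map Phi sending each point x of the sphere to the oriented great circle
   (fiber) through x: Phi is continuous on the sphere, x lies on Phi x, and
   any point y on the fiber Phi x has the same fiber. *)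
Definition great_circle_fibration (N : nat) (Phi : 'rV[R]_N -> 'M[R]_N) : Prop :=
  [/\ {within @sphere N, continuous Phi},
      (forall x, sphere x -> is_ogc (Phi x) /\ ogc_points (Phi x) x) &
      (forall x y, sphere x -> ogc_points (Phi x) y -> Phi y = Phi x)].

Definition lastc (n : nat) (x : 'rV[R]_(n + 1)) : R := rsubmx x 0 0.

Definition upper (n : nat) (x : 'rV[R]_(n + 1)) : Prop := 0 < lastc x.

(* J and K are positive multiples: they encode the same oriented 2-plane *)
Definition same_oplane (N : nat) (J K : 'M[R]_N) : Prop :=
  exists c : R, 0 < c /\ J = c *: K.

(* The line l_y = {(y + t B(y), t) : t in R} of R^{n+1}, placed in the
   hyperplane x_{n+2} = 1 of R^{n+2}: its points are p + t d with
   p = (y, 0, 1) and d = (B y, 1, 0).  The oriented plane alpha(l_y)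
   (oriented by increasing t) is encoded by the bivector p /\ d. *)
Definition line_pt (n : nat) (y : 'rV[R]_n) : 'rV[R]_(n + 1 + 1) :=
  row_mx (row_mx y 0) (const_mx 1).
Definition line_dir (n : nat) (B : 'M[R]_n) (y : 'rV[R]_n) : 'rV[R]_(n + 1 + 1) :=
  row_mx (row_mx (y *m B) (const_mx 1)) 0.
Definition line_biv (n : nat) (B : 'M[R]_n) (y : 'rV[R]_n) : 'M[R]_(n + 1 + 1) :=
  bivec (line_pt y) (line_dir B y).

(* The line fibration generated by B corresponds to a great circle fibration
   of S^{n+1}: there is a continuous great circle fibration whose fibers
   meeting the open upper hemisphere are exactly the oriented great circles
   S^{n+1} /\ alpha(l_y), y in R^n. *)
Definition corresponds_to_gcf (n : nat) (B : 'M[R]_n) : Prop :=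
  exists Phi : 'rV[R]_(n + 1 + 1) -> 'M[R]_(n + 1 + 1),
    [/\ great_circle_fibration Phi,
        (forall x, sphere x ->
           (exists z, ogc_points (Phi x) z /\ upper z) ->
           exists y : 'rV[R]_n, same_oplane (Phi x) (line_biv B y)) &
        (forall y : 'rV[R]_n, exists x, [/\ sphere x,
           (exists z, ogc_points (Phi x) z /\ upper z) &
           same_oplane (Phi x) (line_biv B y)])].

Definition no_real_eigenvalue (n : nat) (B : 'M[R]_n) : Prop :=
  forall a : R, ~ eigenvalue B a.

Definition invariant_on_planes (n : nat) (B : 'M[R]_n) : Prop :=
  forall u : 'rV[R]_n, u != 0 -> (u *m B *m B <= col_mx u (u *m B))%MS.

End GreatCircles.

(* Suppose [u B^2 = a u + b u B] for all [u], with [b^2 + 4a < 0].  Then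
   [K : (y, s, t) |-> (y B, b s + t, a s)] on [R^(2m+2)] satisfies the same
   relation, so it has no real eigenvector and every plane [<x, x K>] is
   [K]-stable; the oriented planes [x /\ x K] therefore fibre the sphere
   continuously, and [K] maps the point [(y, 0, 1)] of the line [l_y] to
   its direction [(y B, 1, 0)].  Invariance on planes provides such [a, b]:
   the coefficients of [u B^2] on [u, u B] cannot depend on [u], and
   [b^2 + 4a >= 0] would produce a real eigenvector.
   Conversely, the fibre through [(u, 0, r)] contains [l_(u/r)], so it is
   [(u, 0, r) /\ (u B, r, 0)]; letting [r -> 0+], continuity makes the fibre
   through [(u, 0, 0)] equal to [u /\ u B].  The same holds for [u B], which
   lies on that fibre, hence [u B /\ u B^2] is a multiple of [u /\ u B], i.e.
   [u B^2] lies in the span of [u] and [u B]. *)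

From HB Require Import structures.
From mathcomp Require Import all_boot all_order all_algebra.
From mathcomp Require Import all_classical all_reals all_analysis.
From mathcomp.algebra_tactics Require Import ring lra.
Import Order.TTheory GRing.Theory Num.Theory.
Import numFieldNormedType.Exports.
Set Implicit Arguments. Unset Strict Implicit. Unset Printing Implicit Defensive.
Local Open Scope classical_set_scope.
Local Open Scope ring_scope.

Section InnerProduct.
Variables (R : realType) (N : nat).
Implicit Types (u v w z : 'rV[R]_N).

Lemma dotvE u v : dotv u v = \sum_i u 0 i * v 0 i.
Proof. by rewrite /dotv !mxE; apply: eq_bigr => i _; rewrite mxE. Qed.

Lemma dotvC u v : dotv u v = dotv v u.
Proof. by rewrite !dotvE; apply: eq_bigr => i _; rewrite mulrC. Qed.

Lemma dotvDl u v w : dotv (u + v) w = dotv u w + dotv v w.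
Proof. by rewrite !dotvE -big_split; apply: eq_bigr => i _; rewrite mxE mulrDl. Qed.

Lemma dotvZl c u w : dotv (c *: u) w = c * dotv u w.
Proof. by rewrite !dotvE mulr_sumr; apply: eq_bigr => i _; rewrite mxE mulrA. Qed.

Lemma dotvDr u v w : dotv w (u + v) = dotv w u + dotv w v.
Proof. by rewrite !(dotvC w) dotvDl. Qed.

Lemma dotvZr c u w : dotv w (c *: u) = c * dotv w u.
Proof. by rewrite !(dotvC w) dotvZl. Qed.

Lemma dotvBr u v w : dotv w (u - v) = dotv w u - dotv w v.
Proof. by rewrite dotvDr -scaleN1r dotvZr mulN1r. Qed.

Lemma dotv0l w : dotv 0 w = 0.
Proof. by rewrite -(scale0r 0) dotvZl mul0r. Qed.

Lemma dotv_gt0 u : u != 0 -> 0 < dotv u u.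
Proof.
have sqr_ge0' i : 0 <= u 0 i * u 0 i by rewrite -expr2 sqr_ge0.
move=> u0; rewrite lt_def dotvE sumr_ge0 // andbT; apply: contra u0.
move=> /eqP/(psumr_eq0P (fun i _ => sqr_ge0' i)) u_eq0; apply/eqP/rowP => i.
by rewrite mxE; apply/eqP; rewrite -[_ == 0]orbb -mulf_eq0 u_eq0.
Qed.

Lemma sphere_neq0 z : sphere z -> z != 0.
Proof.
by apply: contraPN => /eqP ->; rewrite /sphere /= dotv0l => /eqP; rewrite eq_sym oner_eq0.
Qed.

Definition normv z := Num.sqrt (dotv z z).
Definition unitv z := (normv z)^-1 *: z.

Lemma normv_gt0 z : z != 0 -> 0 < normv z.
Proof. by move=> z0; rewrite sqrtr_gt0 dotv_gt0. Qed.

Lemma sphere_unitv z : z != 0 -> sphere (unitv z).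
Proof.
move=> z0; have n0 := normv_gt0 z0; rewrite /sphere /= dotvZl dotvZr.
rewrite -[dotv z z]sqr_sqrtr ?(ltW (dotv_gt0 z0)) // -/(normv z).
by field; exact: lt0r_neq0.
Qed.

Lemma unitv_sphere z : sphere z -> unitv z = z.
Proof. by move=> zz; rewrite /unitv /normv zz sqrtr1 invr1 scale1r. Qed.

Lemma unitvZ c z : 0 < c -> unitv (c *: z) = unitv z.
Proof.
move=> c0; have [->|z0] := eqVneq z 0; first by rewrite scaler0.
rewrite /unitv /normv dotvZl dotvZr mulrA sqrtrM ?mulr_ge0 ?ltW //.
rewrite -expr2 sqrtr_sqr gtr0_norm // invfM scalerA mulrAC mulVf ?mul1r //.
exact: lt0r_neq0.
Qed.

End InnerProduct.

Lemma exists_cos_sin (R : realType) (x y : R) : x ^+ 2 + y ^+ 2 = 1 ->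
  exists t, cos t = x /\ sin t = y.
Proof.
move=> xy1; have x_itv : -1 <= x <= 1 by apply/andP; split; nra.
have sin_acosx : sin (acos x) = `|y|.
  by rewrite sin_acos // (_ : 1 - x ^+ 2 = y ^+ 2) ?sqrtr_sqr //; lra.
have [y0|y0] := leP 0 y.
  by exists (acos x); rewrite acosK ?in_itv // sin_acosx ger0_norm.
by exists (- acos x); rewrite cosN sinN acosK ?in_itv // sin_acosx ltr0_norm ?opprK.
Qed.

Section Bivectors.
Variables (R : realType) (N : nat).
Implicit Types (a b u v w y z : 'rV[R]_N).

Lemma mulmx_bivec z a b : z *m bivec a b = dotv z a *: b - dotv z b *: a.
Proof.
have mulmx_tr y w : y *m w^T = (dotv y w)%:M by rewrite {1}[y *m w^T]mx11_scalar.
by rewrite /bivec mulmxBr !mulmxA !mulmx_tr !mul_scalar_mx.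
Qed.

Lemma bivecE a b i j : bivec a b i j = a 0 i * b 0 j - b 0 i * a 0 j.
Proof. by rewrite /bivec !mxE !big_ord1 !mxE. Qed.

Lemma bivecDr a b b' : bivec a (b + b') = bivec a b + bivec a b'.
Proof. by apply/matrixP => i j; rewrite [in RHS]mxE !bivecE !mxE; ring. Qed.

Lemma bivecZl c a b : bivec (c *: a) b = c *: bivec a b.
Proof. by apply/matrixP => i j; rewrite [in RHS]mxE !bivecE !mxE; ring. Qed.

Lemma bivecZr c a b : bivec a (c *: b) = c *: bivec a b.
Proof. by apply/matrixP => i j; rewrite [in RHS]mxE !bivecE !mxE; ring. Qed.

Lemma bivecC a b : bivec b a = - bivec a b.
Proof. by apply/matrixP => i j; rewrite [in RHS]mxE !bivecE; ring. Qed.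

Lemma bivecxx a : bivec a a = 0.
Proof. by apply/matrixP => i j; rewrite [in RHS]mxE !bivecE; ring. Qed.

Lemma mulmx_bivec2 z a b : z *m bivec a b *m bivec a b =
  (dotv z a * dotv a b - dotv z b * dotv a a) *: b
  + (dotv z b * dotv a b - dotv z a * dotv b b) *: a.
Proof.
rewrite [z *m _]mulmx_bivec mulmxBl -!scalemxAl !mulmx_bivec (dotvC b a).
by apply/rowP => i; rewrite !mxE; ring.
Qed.

Lemma mxtrace_bivec2 a b :
  \tr (bivec a b *m bivec a b) = 2 * dotv a b ^+ 2 - 2 * dotv a a * dotv b b.
Proof.
have tr_mul y w : \tr (y^T *m w) = dotv w y.
  by rewrite mxtrace_mulC {1}[w *m y^T]mx11_scalar mxtrace_scalar.
rewrite {1}/bivec mulmxBl -!mulmxA !mulmx_bivec !mulmxBr -!scalemxAr.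
by rewrite !raddfB /= !mxtraceZ !tr_mul (dotvC b a); ring.
Qed.

Lemma bivec_eq0 u v : u != 0 ->
  bivec u v = 0 -> v = (dotv u v / dotv u u) *: u.
Proof.
move=> u0 /(congr1 (mulmx u)); rewrite mulmx0 mulmx_bivec => /eqP.
rewrite subr_eq0 => /eqP uv; apply: (scalerI (lt0r_neq0 (dotv_gt0 u0))).
by rewrite uv scalerA mulrCA mulfV ?mulr1 // lt0r_neq0 ?dotv_gt0.
Qed.

Lemma bivec_span u v w c : v != 0 ->
  bivec v w = c *: bivec u v -> exists al be, w = al *: u + be *: v.
Proof.
move=> v0 /(congr1 (mulmx v)); rewrite -scalemxAr !mulmx_bivec.
have := lt0r_neq0 (dotv_gt0 v0).
move: (dotv v u) (dotv v v) (dotv v w) => vu vv vw vv0 E.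
exists (- c), ((c * vu + vw) / vv); apply: (scalerI vv0); apply/rowP => i.
have /rowP/(_ i) := E; rewrite !mxE => Ei.
rewrite [RHS](_ : _ =
  vv * w 0 i - (vv * w 0 i - vw * v 0 i) + c * (vu * v 0 i - vv * u 0 i)).
  by rewrite Ei; ring.
by field.
Qed.

Lemma mulmx_orthonormal_bivec2 u v z : orthonormal u v ->
  z *m bivec u v *m bivec u v = - (dotv z u *: u + dotv z v *: v).
Proof.
case=> uu vv uv0; rewrite mulmx_bivec2 uu vv uv0.
by apply/rowP => i; rewrite !mxE; ring.
Qed.

Lemma mxtrace_orthonormal_bivec2 u v : orthonormal u v ->
  \tr (bivec u v *m bivec u v) = -2.
Proof. by case=> uu vv uv0; rewrite mxtrace_bivec2 uu vv uv0; ring. Qed.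

Lemma orthonormal_bivec_neq0 u v : orthonormal u v -> bivec u v != 0.
Proof.
move=> /mxtrace_orthonormal_bivec2; apply: contra_eqN => /eqP ->.
by rewrite mul0mx mxtrace0 eq_sym oppr_eq0 pnatr_eq0.
Qed.

Lemma orthonormal_bivec_pos_eq u v u' v' c :
  orthonormal u v -> orthonormal u' v' -> 0 < c ->
  bivec u v = c *: bivec u' v' -> bivec u v = bivec u' v'.
Proof.
move=> /mxtrace_orthonormal_bivec2 trJ /mxtrace_orthonormal_bivec2 trJ' c0 E.
move: trJ; rewrite E -scalemxAl -scalemxAr !mxtraceZ trJ' => c2.
by rewrite (_ : c = 1) ?scale1r //; nra.
Qed.

(* [bivec u v] squares to minus the orthogonal projection onto its plane,
   which characterises the plane independently of the chosen basis. *)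
Lemma ogc_points_orthonormal u v y : orthonormal u v ->
  ogc_points (bivec u v) y <-> sphere y /\ y = dotv y u *: u + dotv y v *: v.
Proof.
move=> uv; split=> [[u' [v' [t [uv' [E ->]]]]]|[yy Ey]].
  have [uu vv uv0] := uv'; set w := cos t *: u' + sin t *: v'.
  have ww : sphere w.
    rewrite /sphere /= !dotvDl !dotvDr !dotvZl !dotvZr uu vv uv0 (dotvC v' u') uv0.
    by rewrite !mulr0 !mulr1 addr0 add0r -!expr2 cos2Dsin2.
  split=> //; apply: oppr_inj; rewrite -(mulmx_orthonormal_bivec2 _ uv) E.
  rewrite (mulmx_orthonormal_bivec2 _ uv') !dotvDl !dotvZl uu vv uv0 (dotvC v' u') uv0.
  by congr (- _); apply/rowP => i; rewrite !mxE; ring.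
have [|t [ct st]] := @exists_cos_sin _ (dotv y u) (dotv y v).
  by move: yy; rewrite /sphere /= {2}Ey dotvDr !dotvZr -!expr2.
by exists u, v, t; rewrite ct st; split.
Qed.

Lemma ogc_points_unitv u v a b c : orthonormal u v ->
  bivec u v = c *: bivec a b -> a != 0 -> ogc_points (bivec u v) (unitv a).
Proof.
move=> uv E a0; have trE := mxtrace_orthonormal_bivec2 uv.
rewrite E -scalemxAl -scalemxAr !mxtraceZ mxtrace_bivec2 in trE.
have aJJ : a *m bivec u v *m bivec u v = - a.
  have k : c * c * (dotv a b * dotv a b - dotv a a * dotv b b) = -1 by nra.
  rewrite E -!scalemxAr -!scalemxAl mulmx_bivec2.
  apply/rowP => i; rewrite !mxE.
  by transitivity (c * c * (dotv a b * dotv a b - dotv a a * dotv b b) * a 0 i);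
    [ring | rewrite k mulN1r].
rewrite (mulmx_orthonormal_bivec2 _ uv) in aJJ; move/oppr_inj: aJJ => Ea.
apply/(ogc_points_orthonormal _ uv); split; first exact: sphere_unitv.
by rewrite /unitv !dotvZl -!scalerA -scalerDr Ea.
Qed.

End Bivectors.

Section MatrixLimits.
Variable R : realType.
Context {T : Type} (F : set_system T) {FF : Filter F}.

Lemma cvg_mx_entrywise m n (f : T -> 'M[R]_(m, n)) (A : 'M[R]_(m, n)) :
  (forall i j, (fun t => f t i j) @ F --> A i j) -> f @ F --> A.
Proof.
move=> fA; apply/cvg_mx_entourageP => E entE.
apply: filter_forall => i; apply: filter_forall => j.
near=> t; rewrite inE; near: t.
exact: (iffLR (cvg_entourageP _ _) (fA i j)) E entE.
Unshelve. all: by end_near. Qed.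

Lemma cvg_mx_entry m n (f : T -> 'M[R]_(m, n)) (A : 'M[R]_(m, n)) i j :
  f @ F --> A -> (fun t => f t i j) @ F --> A i j.
Proof. exact: (continuous_cvg _ (@coord_continuous R m n i j A)). Qed.

Lemma cvg_mulmx m n p (f : T -> 'M[R]_(m, n)) (g : T -> 'M[R]_(n, p))
    (A : 'M[R]_(m, n)) (B : 'M[R]_(n, p)) :
  f @ F --> A -> g @ F --> B -> (fun t => f t *m g t) @ F --> A *m B.
Proof.
move=> fA gB; apply: cvg_mx_entrywise => i j; rewrite mxE.
under eq_fun do rewrite mxE.
apply: cvg_big => [|k _]; first exact: add_continuous.
by apply: cvgM; exact: cvg_mx_entry.
Qed.

Lemma cvg_trmx m n (f : T -> 'M[R]_(m, n)) (A : 'M[R]_(m, n)) :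
  f @ F --> A -> (fun t => (f t)^T) @ F --> A^T.
Proof.
move=> fA; apply: cvg_mx_entrywise => i j; rewrite mxE.
under eq_fun do rewrite mxE.
exact: cvg_mx_entry.
Qed.

Variable N : nat.
Implicit Types (f g : T -> 'rV[R]_N) (a b : 'rV[R]_N).

Lemma cvg_dotv f g a b :
  f @ F --> a -> g @ F --> b -> (fun t => dotv (f t) (g t)) @ F --> dotv a b.
Proof. by move=> fa gb; apply/cvg_mx_entry/cvg_mulmx/cvg_trmx. Qed.

Lemma cvg_bivec f g a b :
  f @ F --> a -> g @ F --> b -> (fun t => bivec (f t) (g t)) @ F --> bivec a b.
Proof. by move=> fa gb; apply: cvgB; apply: cvg_mulmx => //; exact: cvg_trmx. Qed.

Lemma cvg_unitv f a : a != 0 -> f @ F --> a -> (fun t => unitv (f t)) @ F --> unitv a.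
Proof.
move=> a0 fa; apply: cvgZ => //; apply: cvgV; first exact/lt0r_neq0/normv_gt0.
exact/(continuous_cvg _ (@sqrt_continuous R _))/cvg_dotv.
Qed.

End MatrixLimits.

(* Along a filter, the positive factor between [f t] and [g t] is forced to be
   [`|f t| / `|g t|], so it converges as soon as the limit of [g] is nonzero. *)
Lemma cvg_pos_multiple (R : realType) (V : normedModType R) (T : Type)
    (F : set_system T) {FF : ProperFilter F} (f g : T -> V) (A G : V) :
  f @ F --> A -> g @ F --> G -> A != 0 -> G != 0 ->
  (\forall t \near F, exists c, 0 < c /\ f t = c *: g t) ->
  exists c, 0 < c /\ A = c *: G.
Proof.
move=> fA gG A0 G0 fg; exists (`|A| / `|G|); split.
  by rewrite divr_gt0 ?normr_gt0.
have cvg_ratio : (fun t => `|f t| / `|g t|) @ F --> `|A| / `|G|.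
  by apply: cvgM; [exact: cvg_norm | apply: cvgV; [rewrite normr_eq0 | exact: cvg_norm]].
have f_ratio : \forall t \near F, `|f t| / `|g t| *: g t = f t.
  apply: filterS fg => t [c [c0 ->]].
  have [->|gt0] := eqVneq (g t) 0; first by rewrite !scaler0.
  by rewrite normrZ gtr0_norm // mulfK ?normr_eq0.
exact: cvg_unique _ fA (cvg_trans (near_eq_cvg f_ratio) (cvgZ cvg_ratio gG)).
Qed.

Lemma cvg_within_range (T : Type) (U : topologicalType) (F : set_system T)
    {FF : Filter F} (A : set U) (f : T -> U) (x : U) :
  (forall t, A (f t)) -> f @ F --> x -> f @ F --> within A (nbhs x).
Proof. by move=> Af fx W /fx; apply: (@filterS _ F) => t /(_ (Af t)). Qed.

Lemma cvg_at_right_affine (R : realType) (V : normedModType R) (x v : V) :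
  x + r *: v @[r --> 0^'+] --> x.
Proof.
apply: cvg_at_right_filter; rewrite -[X in _ --> X]addr0 -(scale0r v).
by apply: cvgD; [exact: cvg_cst | apply: cvgZ; [exact: cvg_id | exact: cvg_cst]].
Qed.

Lemma quad_form_gt0 (R : realType) (a b x y : R) : b ^+ 2 + 4 * a < 0 ->
  (x != 0) || (y != 0) -> 0 < x ^+ 2 + x * y * b - a * y ^+ 2.
Proof.
move=> disc xy.
have [y0|y0] := eqVneq y 0.
  rewrite y0 eqxx orbF in xy.
  have x2 : 0 < x ^+ 2 by rewrite lt_def sqrf_eq0 xy sqr_ge0.
  by rewrite y0; nra.
have y2 : 0 < y ^+ 2 by rewrite lt_def sqrf_eq0 y0 sqr_ge0.
have := sqr_ge0 (2 * x + b * y); nra.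
Qed.

Section PlaneFibration.
Variables (R : realType) (N : nat) (K : 'M[R]_N) (a b : R).
Hypothesis K2 : forall x : 'rV[R]_N, x *m K *m K = a *: x + b *: (x *m K).
Hypothesis disc : b ^+ 2 + 4 * a < 0.
Implicit Types (x y : 'rV[R]_N) (al be : R).

Lemma eigenvectorK_eq0 x l : x *m K = l *: x -> x = 0.
Proof.
move=> xK; have : (l ^+ 2 - b * l - a) *: x = 0.
  have := K2 x; rewrite xK -scalemxAl xK scalerA => E.
  rewrite -[RHS](subrr ((l * l) *: x)) {2}E.
  by apply/rowP => i; rewrite !mxE; ring.
move/eqP; rewrite scaler_eq0 => /orP [/eqP l_root|/eqP //].
have := @quad_form_gt0 _ a b (- l) 1 disc; rewrite oner_neq0 orbT => /(_ isT).
by rewrite (_ : _ + _ = 0) ?ltxx // -l_root; ring.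
Qed.

Definition orthK x := x *m K - dotv (x *m K) (unitv x) *: unitv x.

Definition fibK x := bivec (unitv x) (unitv (orthK x)).

Lemma orthK_neq0 x : x != 0 -> orthK x != 0.
Proof.
move=> x0; apply: contra_neq x0 => /eqP; rewrite subr_eq0 /unitv scalerA => /eqP.
exact: eigenvectorK_eq0.
Qed.

Lemma fibK_orthonormal x : x != 0 -> orthonormal (unitv x) (unitv (orthK x)).
Proof.
move=> x0; have ux := sphere_unitv x0; split => //; first exact/sphere_unitv/orthK_neq0.
rewrite [unitv (orthK x)]/unitv dotvZr /orthK; set k := dotv (x *m K) _.
by rewrite dotvBr dotvZr ux mulr1 dotvC subrr mulr0.
Qed.

Lemma fibK_same_oplane x : x != 0 -> same_oplane (fibK x) (bivec x (x *m K)).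
Proof.
move=> x0; exists ((normv x)^-1 * (normv (orthK x))^-1); split.
  by rewrite mulr_gt0 // invr_gt0 normv_gt0 // orthK_neq0.
rewrite /fibK {1}/unitv {1}/unitv bivecZl bivecZr scalerA /orthK.
by rewrite /unitv bivecDr -scaleNr !bivecZr bivecxx !scaler0 addr0 mulrC.
Qed.

Lemma bivec_combK x al be (y := al *: x + be *: (x *m K)) :
  bivec y (y *m K) = (al ^+ 2 + al * be * b - a * be ^+ 2) *: bivec x (x *m K).
Proof.
rewrite /y mulmxDl -!scalemxAl K2; move: (x *m K) => xK.
by apply/matrixP => i j; rewrite [in RHS]mxE !bivecE !mxE; ring.
Qed.

Lemma fibK_comb x al be : x != 0 -> al *: x + be *: (x *m K) != 0 ->
  fibK (al *: x + be *: (x *m K)) = fibK x.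
Proof.
move=> x0 y0; set y := al *: x + be *: (x *m K).
have q_gt0 : 0 < al ^+ 2 + al * be * b - a * be ^+ 2.
  apply: quad_form_gt0 => //; apply: contraNT y0; rewrite negb_or !negbK.
  by case/andP => /eqP-> /eqP->; rewrite /y !scale0r addr0.
have [c1 [c1_gt0 E1]] := fibK_same_oplane y0.
have [c2 [c2_gt0 E2]] := fibK_same_oplane x0.
apply: (orthonormal_bivec_pos_eq (c := c1 * (al ^+ 2 + al * be * b - a * be ^+ 2) / c2));
  [exact: fibK_orthonormal | exact: fibK_orthonormal | by rewrite !mulr_gt0 ?invr_gt0 |].
rewrite -/(fibK y) -/(fibK x) E1 bivec_combK E2 !scalerA; congr (_ *: _).
by field; exact: lt0r_neq0.
Qed.

Lemma fibK_unitv x : x != 0 -> fibK (unitv x) = fibK x.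
Proof.
move=> x0; rewrite -[unitv x]addr0 -(scale0r (x *m K)) fibK_comb // scale0r addr0.
exact/sphere_neq0/sphere_unitv.
Qed.

Lemma ogc_points_fibK x y : x != 0 -> ogc_points (fibK x) y ->
  sphere y /\ exists al be, y = al *: x + be *: (x *m K).
Proof.
move=> x0 /(ogc_points_orthonormal y (fibK_orthonormal x0)) [yy Ey].
split=> //; rewrite Ey.
set d1 := dotv y _; set d2 := dotv y _; set k := dotv (x *m K) (unitv x).
exists (d1 / normv x - d2 / normv (orthK x) * k / normv x), (d2 / normv (orthK x)).
rewrite /orthK -/k /unitv; move: (x *m K) => xK.
by apply/rowP => i; rewrite !mxE; ring.
Qed.

Lemma fibK_fiber x y : sphere x -> ogc_points (fibK x) y -> fibK y = fibK x.
Proof.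
move=> /sphere_neq0 x0 /(ogc_points_fibK x0) [/sphere_neq0 y0 [al [be Ey]]].
by rewrite Ey fibK_comb // -Ey.
Qed.

Lemma fibK_continuous x : x != 0 -> {for x, continuous fibK}.
Proof.
move=> x0; have cvg_x : (fun y : 'rV_N => y) @ nbhs x --> x := cvg_id.
have cvg_unit : (fun y : 'rV_N => unitv y) @ nbhs x --> unitv x.
  exact: cvg_unitv.
have cvgK : (fun y : 'rV_N => y *m K) @ nbhs x --> x *m K.
  by apply: cvg_mulmx => //; exact: cvg_cst.
have cvg_dot : (fun y : 'rV_N => dotv (y *m K) (unitv y)) @ nbhs x -->
    dotv (x *m K) (unitv x) by exact: cvg_dotv.
have cvg_orthK : (fun y : 'rV_N => orthK y) @ nbhs x --> orthK x.
  by rewrite /orthK; apply: cvgB => //; exact: cvgZ.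
have cvg_unit_orthK : (fun y : 'rV_N => unitv (orthK y)) @ nbhs x --> unitv (orthK x).
  by apply: cvg_unitv => //; exact: orthK_neq0.
suff cvg_fibK : (fun y : 'rV_N => fibK y) @ nbhs x --> fibK x by [].
exact: cvg_bivec.
Qed.

Lemma fibK_gcf : great_circle_fibration fibK.
Proof.
split.
- apply: continuous_in_subspaceT => x; rewrite inE => /sphere_neq0.
  exact: fibK_continuous.
- move=> x xx; have x0 := sphere_neq0 xx; have uv := fibK_orthonormal x0.
  split; first by exists (unitv x), (unitv (orthK x)).
  apply/(ogc_points_orthonormal _ uv); split=> //.
  move: uv; rewrite unitv_sphere // => -[uu _ uv0].
  by rewrite uu uv0 scale1r scale0r addr0.
- by move=> x y xx; exact: fibK_fiber.
Qed.

End PlaneFibration.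

Section Coordinates.
Variables (R : realType) (n : nat).
Implicit Types (y : 'rV[R]_n) (s t : R).

Definition vec y s t : 'rV[R]_(n + 1 + 1) := row_mx (row_mx y s%:M) t%:M.

Lemma vec_surj (x : 'rV[R]_(n + 1 + 1)) : exists y s t, x = vec y s t.
Proof.
exists (lsubmx (lsubmx x)), (rsubmx (lsubmx x) 0 0), (rsubmx x 0 0).
by rewrite /vec -!mx11_scalar !hsubmxK.
Qed.

Lemma vec_inj y s t y' s' t' :
  vec y s t = vec y' s' t' -> [/\ y = y', s = s' & t = t'].
Proof.
case/eq_row_mx => /eq_row_mx [-> /rowP/(_ 0)] + /rowP/(_ 0).
by rewrite !mxE !eqxx !mulr1n.
Qed.

Lemma vec0 : vec 0 0 0 = 0.
Proof. by rewrite /vec !raddf0 !row_mx0. Qed.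

Lemma vecD y s t y' s' t' : vec y s t + vec y' s' t' = vec (y + y') (s + s') (t + t').
Proof. by rewrite /vec !add_row_mx !raddfD. Qed.

Lemma vecZ c y s t : c *: vec y s t = vec (c *: y) (c * s) (c * t).
Proof. by rewrite /vec !scale_row_mx !scale_scalar_mx. Qed.

Lemma vec_eq0 y s t : vec y s t = 0 -> [/\ y = 0, s = 0 & t = 0].
Proof. by rewrite -vec0; exact: vec_inj. Qed.

Lemma lastc_vec y s t : lastc (vec y s t) = t.
Proof. by rewrite /lastc /vec row_mxKr mxE eqxx mulr1n. Qed.

Lemma lastcZ c (x : 'rV[R]_(n + 1 + 1)) : lastc (c *: x) = c * lastc x.
Proof. by rewrite /lastc linearZ mxE. Qed.

Lemma line_pt_vec y : line_pt y = vec y 0 1.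
Proof.
by congr row_mx; first congr row_mx; apply/rowP => i; rewrite ord1 !mxE.
Qed.

Lemma line_dir_vec (B : 'M[R]_n) y : line_dir B y = vec (y *m B) 1 0.
Proof.
by congr row_mx; first congr row_mx; apply/rowP => i; rewrite ord1 !mxE.
Qed.

Lemma line_pt_neq0 y : line_pt y != 0.
Proof. by rewrite line_pt_vec; apply/eqP => /vec_eq0 [_ _ /eqP]; rewrite oner_eq0. Qed.

End Coordinates.

Section LiftedFibration.
Variables (R : realType) (n : nat) (B : 'M[R]_n) (a b : R).
Hypothesis B2 : forall u : 'rV[R]_n, u *m B *m B = a *: u + b *: (u *m B).
Hypothesis disc : b ^+ 2 + 4 * a < 0.
Implicit Types (x z : 'rV[R]_(n + 1 + 1)) (y : 'rV[R]_n).

(* [(y, s, t) *m liftK = (y *m B, b s + t, a s)]: it sends the point [(y, 0, 1)]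
   of the line [l_y] to its direction [(y *m B, 1, 0)]. *)
Definition liftK : 'M[R]_(n + 1 + 1) :=
  block_mx (block_mx B 0 0 b%:M) (col_mx 0 a%:M) (row_mx 0 1%:M) 0.

Lemma vec_mulK y s t : vec y s t *m liftK = vec (y *m B) (s * b + t) (s * a).
Proof.
rewrite /vec /liftK !mul_row_block mul_row_col mul_mx_row !mulmx0 ?mul0mx.
by rewrite !add0r !addr0 -!scalar_mxM mulr1 add_row_mx addr0 raddfD.
Qed.

Lemma liftK2 x : x *m liftK *m liftK = a *: x + b *: (x *m liftK).
Proof.
have [y [s [t ->]]] := vec_surj x.
by rewrite !vec_mulK !vecZ vecD B2; congr vec; ring.
Qed.

Lemma line_pt_mulK y : line_pt y *m liftK = line_dir B y.
Proof. by rewrite line_pt_vec line_dir_vec vec_mulK mul0r add0r mul0r. Qed.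

Lemma line_pt_comb z : 0 < lastc z ->
  exists y al be, line_pt y = al *: z + be *: (z *m liftK).
Proof.
have [y [s [t ->]]] := vec_surj z; rewrite lastc_vec => t_gt0.
set D := s * s * a - t * (s * b + t).
have D_lt0 : D < 0.
  have := @quad_form_gt0 _ a b t s disc; rewrite (lt0r_neq0 t_gt0) => /(_ isT).
  by rewrite /D; lra.
set al := - (s * b + t) / D; set be := s / D.
exists (al *: y + be *: (y *m B)), al, be.
rewrite vec_mulK !vecZ vecD line_pt_vec; congr vec; rewrite /al /be /D.
  by field; exact: ltr0_neq0.
by field; exact: ltr0_neq0.
Qed.

Lemma fibK_line y : same_oplane (fibK liftK (line_pt y)) (line_biv B y).
Proof.
rewrite /line_biv -line_pt_mulK.
exact/(fibK_same_oplane liftK2 disc)/line_pt_neq0.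
Qed.

Lemma corresponds_to_gcf_liftK : corresponds_to_gcf B.
Proof.
have gcf := fibK_gcf liftK2 disc.
exists (fibK liftK); split=> // [x xx [z [zx z_up]]|y].
  have [/sphere_neq0 z0 _] := ogc_points_fibK liftK2 disc (sphere_neq0 xx) zx.
  have [y [al [be Ey]]] := line_pt_comb z_up.
  have fib_line : fibK liftK (line_pt y) = fibK liftK z.
    by rewrite Ey (fibK_comb liftK2 disc) // -Ey line_pt_neq0.
  by exists y; rewrite -(fibK_fiber liftK2 disc xx zx) -fib_line; exact: fibK_line.
have p0 := line_pt_neq0 y; have pp := sphere_unitv p0.
exists (unitv (line_pt y)); split=> //; last first.
  by rewrite (fibK_unitv liftK2 disc p0); exact: fibK_line.
exists (unitv (line_pt y)); split; first by case: gcf => _ /(_ _ pp) [].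
by rewrite /upper lastcZ line_pt_vec lastc_vec mulr1 invr_gt0 -line_pt_vec normv_gt0.
Qed.

End LiftedFibration.

Lemma eigenvector_eq0 (R : realType) n (B : 'M[R]_n) (u : 'rV[R]_n) l :
  no_real_eigenvalue B -> u *m B = l *: u -> u = 0.
Proof.
by move=> hB uB; apply/eqP/negPn/negP => u0; apply: (hB l); apply/eigenvalueP; exists u.
Qed.

Lemma gcf_fiber_unitv (R : realType) N (Phi : 'rV[R]_N -> 'M[R]_N) x p q c :
  great_circle_fibration Phi -> sphere x -> Phi x = c *: bivec p q -> p != 0 ->
  Phi (unitv p) = Phi x.
Proof.
case=> _ ogc fiber xx E p0; have [[u [v [uv Ex]]] _] := ogc x xx.
by apply: fiber => //; rewrite Ex; apply: (ogc_points_unitv uv _ p0); rewrite -Ex E.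
Qed.

Section EquatorFibers.
Variables (R : realType) (n : nat) (B : 'M[R]_n).
Variable Phi : 'rV[R]_(n + 1 + 1) -> 'M[R]_(n + 1 + 1).
Hypothesis hB : no_real_eigenvalue B.
Hypothesis gcf : great_circle_fibration Phi.
Hypothesis Phi_lines : forall y : 'rV[R]_n, exists x, [/\ sphere x,
  (exists z, ogc_points (Phi x) z /\ upper z) & same_oplane (Phi x) (line_biv B y)].

Lemma gcf_line_fiber y : same_oplane (Phi (unitv (line_pt y))) (line_biv B y).
Proof.
have [x [xx _ [c [c_gt0 E]]]] := Phi_lines y.
by exists c; rewrite (gcf_fiber_unitv gcf xx E) ?line_pt_neq0.
Qed.

Lemma gcf_fiber_vec u r : 0 < r ->
  same_oplane (Phi (unitv (vec u 0 r))) (bivec (vec u 0 r) (vec (u *m B) r 0)).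
Proof.
move=> r_gt0; have [c [c_gt0 E]] := gcf_line_fiber (r^-1 *: u).
have r0 : r != 0 := lt0r_neq0 r_gt0.
have Ep : line_pt (r^-1 *: u) = r^-1 *: vec u 0 r.
  by rewrite line_pt_vec vecZ mulr0 mulVf.
have Ed : line_dir B (r^-1 *: u) = r^-1 *: vec (u *m B) r 0.
  by rewrite line_dir_vec vecZ mulr0 mulVf // -scalemxAl.
exists (c * (r^-1 * r^-1)); split; first by rewrite !mulr_gt0 ?invr_gt0.
move: E; rewrite Ep unitvZ ?invr_gt0 // => ->.
by rewrite /line_biv Ep Ed bivecZl bivecZr !scalerA mulrA.
Qed.

Lemma gcf_equator_fiber u : u != 0 ->
  same_oplane (Phi (unitv (vec u 0 0))) (bivec (vec u 0 0) (vec (u *m B) 0 0)).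
Proof.
move=> u0; pose p r := vec u 0 r; pose d r := vec (u *m B) r 0.
have p0 r : p r != 0 by apply/eqP => /vec_eq0 [/eqP]; rewrite (negbTE u0).
have cvg_p : p r @[r --> 0^'+] --> p 0.
  have Ep r : p r = p 0 + r *: vec 0 0 1.
    by rewrite vecZ vecD !(scaler0, mulr0, addr0, add0r, mulr1).
  by under eq_fun do rewrite Ep; exact: cvg_at_right_affine.
have cvg_d : d r @[r --> 0^'+] --> d 0.
  have Ed r : d r = d 0 + r *: vec 0 1 0.
    by rewrite vecZ vecD !(scaler0, mulr0, addr0, add0r, mulr1).
  by under eq_fun do rewrite Ed; exact: cvg_at_right_affine.
have [cont ogc _] := gcf.
have cvg_Phi : Phi (unitv (p r)) @[r --> 0^'+] --> Phi (unitv (p 0)).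
  have cvg_unit : unitv (p r) @[r --> 0^'+] --> unitv (p 0) by exact: cvg_unitv.
  have cvg_sphere : unitv (p r) @[r --> 0^'+] -->
      within (@sphere R _) (nbhs (unitv (p 0))).
    by apply: cvg_within_range cvg_unit => r; exact: sphere_unitv.
  exact: cvg_comp cvg_sphere ((subspace_continuousP _ _).1 cont _ (sphere_unitv (p0 0))).
apply: cvg_pos_multiple cvg_Phi (cvg_bivec cvg_p cvg_d) _ _ _.
- have [[u' [v' [uv ->]]] _] := ogc _ (sphere_unitv (p0 0)).
  exact: orthonormal_bivec_neq0.
- apply/eqP => /(bivec_eq0 (p0 0)); rewrite vecZ !mulr0 => /vec_inj [uB _ _].
  by move/eqP: u0; apply; exact: eigenvector_eq0 hB uB.
- by near=> r; apply: gcf_fiber_vec; near: r; exact: nbhs_right_gt.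
Unshelve. all: by end_near. Qed.

End EquatorFibers.

Lemma comb_submx_col_mx (R : fieldType) m n (u v : 'M[R]_(m, n)) al be :
  ((al *: u + be *: v)%R <= col_mx u v)%MS.
Proof. by rewrite -addsmxE; apply: addmx_sub_adds; exact: scalemx_sub. Qed.

Section PlaneInvariance.
Variables (R : realType) (n : nat) (B : 'M[R]_n).
Hypothesis hB : no_real_eigenvalue B.
Implicit Types (u v w : 'rV[R]_n) (a b : R).

Definition quad_mx a b := B *m B - a%:M - b *: B.

Lemma mulmx_quad_mx u a b :
  u *m quad_mx a b = u *m B *m B - a *: u - b *: (u *m B).
Proof. by rewrite /quad_mx !mulmxBr mulmxA mul_mx_scalar -scalemxAr. Qed.

Lemma quad_mxB u a b a' b' :
  u *m quad_mx a b - u *m quad_mx a' b' = (a' - a) *: u + (b' - b) *: (u *m B).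
Proof. by rewrite !mulmx_quad_mx; apply/rowP => i; rewrite !mxE; ring. Qed.

Lemma quad_mx_uniq u a b a' b' : u != 0 ->
  u *m quad_mx a b = 0 -> u *m quad_mx a' b' = 0 -> a = a' /\ b = b'.
Proof.
move=> u0 Q0 Q0'; have := quad_mxB u a b a' b'; rewrite Q0 Q0' subrr => /esym E.
have [d0|d0] := eqVneq (b' - b) 0.
  move: E; rewrite d0 scale0r addr0 => /eqP; rewrite scaler_eq0 (negbTE u0) orbF.
  by rewrite !subr_eq0 => /eqP ->; move/eqP: d0; rewrite subr_eq0 => /eqP ->.
have uB : u *m B = ((a - a') / (b' - b)) *: u.
  apply: (scalerI d0); rewrite scalerA mulrC divfK //; apply/rowP => i.
  by have /rowP/(_ i) := E; rewrite !mxE => Ei; lra.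
by move: u0; rewrite (eigenvector_eq0 hB uB) eqxx.
Qed.

(* [quad_mx a b] commutes with [B], so its kernel is [B]-stable. *)
Lemma quad_mx_comb u a b al be : u *m quad_mx a b = 0 ->
  (al *: u + be *: (u *m B)) *m quad_mx a b = 0.
Proof.
have BQ : B *m quad_mx a b = quad_mx a b *m B.
  rewrite /quad_mx !(mulmxBl, mulmxBr) mul_mx_scalar mul_scalar_mx.
  by rewrite -scalemxAl -scalemxAr !mulmxA.
by move=> Q0; rewrite mulmxDl -!scalemxAl -mulmxA BQ mulmxA Q0 mul0mx !scaler0 addr0.
Qed.

(* If [b^2 + 4 a >= 0] then [X^2 - b X - a = (X - r) (X - s)] with real [r, s],
   and [u *m B - s *: u] is either zero or an eigenvector for [r]. *)
Lemma quad_mx_disc u a b : u != 0 -> u *m quad_mx a b = 0 -> b ^+ 2 + 4 * a < 0.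
Proof.
move=> u0; rewrite mulmx_quad_mx => /eqP; rewrite subr_eq0 subr_eq => /eqP uB2.
rewrite ltNge; apply/negP => disc_ge0; set sd := Num.sqrt (b ^+ 2 + 4 * a).
have sd2 : sd ^+ 2 = b ^+ 2 + 4 * a by rewrite sqr_sqrtr.
set r := (b + sd) / 2; set s := (b - sd) / 2.
have [w0|w0] := eqVneq (u *m B - s *: u) 0.
  move/eqP: u0; apply; apply: (eigenvector_eq0 hB (l := s)).
  by apply/eqP; rewrite -subr_eq0 w0.
move/eqP: w0; apply; apply: (eigenvector_eq0 hB (l := r)).
rewrite mulmxBl -scalemxAl uB2; move: (u *m B) => uB.
by apply/rowP => i; rewrite !mxE /r /s; nra.
Qed.

Hypothesis hinv : invariant_on_planes B.

Lemma invariant_quad_mx u : u != 0 -> exists a b, u *m quad_mx a b = 0.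
Proof.
move=> /hinv/submxP [D]; rewrite -[D]hsubmxK mul_row_col.
rewrite [lsubmx D]mx11_scalar [rsubmx D]mx11_scalar !mul_scalar_mx => E.
by exists (lsubmx D 0 0), (rsubmx D 0 0); rewrite mulmx_quad_mx E -addrA -opprD subrr.
Qed.

(* Compare the coefficients of [u], [w] with those of [u + w]: the defect
   [v = u *m quad_mx a3 b3] lies both in [<u, u B>] and in [<w, w B>]. *)
Lemma invariant_quad_mx_const u w a1 b1 a2 b2 : u != 0 -> w != 0 ->
  u *m quad_mx a1 b1 = 0 -> w *m quad_mx a2 b2 = 0 -> a1 = a2 /\ b1 = b2.
Proof.
move=> u0 w0 Q1 Q2; have [uw0|uw0] := eqVneq (u + w) 0.
  apply: quad_mx_uniq u0 Q1 _; apply: oppr_inj; rewrite oppr0 -mulNmx.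
  by rewrite (_ : - u = w) //; apply/eqP; rewrite eq_sym -addr_eq0 addrC uw0.
have [a3 [b3 Q3]] := invariant_quad_mx uw0; set v := u *m quad_mx a3 b3.
have Ev : v = (a1 - a3) *: u + (b1 - b3) *: (u *m B) by rewrite -quad_mxB Q1 subr0.
have Ew : w *m quad_mx a3 b3 = - v.
  by apply/eqP; rewrite -addr_eq0 /v -mulmxDl addrC Q3.
have Ev' : - v = (a2 - a3) *: w + (b2 - b3) *: (w *m B).
  by rewrite -quad_mxB Q2 subr0.
have [v0|v0] := eqVneq v 0.
  have Q3w : w *m quad_mx a3 b3 = 0 by rewrite Ew v0 oppr0.
  by have [-> ->] := quad_mx_uniq u0 Q1 v0; have [-> ->] := quad_mx_uniq w0 Q2 Q3w.
apply: quad_mx_uniq v0 _ _; first by rewrite Ev; exact: quad_mx_comb.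
by apply: oppr_inj; rewrite oppr0 -mulNmx Ev'; exact: quad_mx_comb.
Qed.

Lemma invariant_quad_rel : exists a b,
  (forall u, u *m B *m B = a *: u + b *: (u *m B)) /\ b ^+ 2 + 4 * a < 0.
Proof.
have [n0|n_gt0] := posnP n.
  exists (-1), 0; split; last by lra.
  by move=> u; apply/rowP => i; have := ltn_ord i; rewrite {2}n0.
pose e : 'rV[R]_n := const_mx 1.
have e0 : e != 0.
  by apply/eqP => /rowP /(_ (Ordinal n_gt0)); rewrite !mxE => /eqP; rewrite oner_eq0.
have [a [b Q0]] := invariant_quad_mx e0.
exists a, b; split; last exact: quad_mx_disc e0 Q0.
move=> u; apply/eqP; rewrite -subr_eq0 opprD addrA -mulmx_quad_mx.
have [->|u0] := eqVneq u 0; first by rewrite mul0mx.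
have [a' [b' Q']] := invariant_quad_mx u0.
by have [-> ->] := invariant_quad_mx_const e0 u0 Q0 Q'; rewrite Q'.
Qed.

End PlaneInvariance.

Theorem proposition6p3 (R : realType) (m : nat) (B : 'M[R]_(2 * m)) :
  no_real_eigenvalue B ->
  (corresponds_to_gcf B <-> invariant_on_planes B).
Proof.
move=> hB; split=> [[Phi [gcf _ Phi_lines]] u u0|hinv]; last first.
  have [a [b [B2 disc]]] := invariant_quad_rel hB hinv.
  exact: corresponds_to_gcf_liftK B2 disc.
set v := u *m B; set U := vec u 0 0; set V := vec v 0 0.
have v0 : v != 0.
  by apply: contra_neq u0 => vB; apply: (eigenvector_eq0 hB (l := 0)); rewrite scale0r.
have U0 : U != 0 by apply: contra_neq u0 => /vec_eq0 [].
have V0 : V != 0 by apply: contra_neq v0 => /vec_eq0 [].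
have [c1 [c1_gt0 E1]] := gcf_equator_fiber hB gcf Phi_lines u0.
have [c2 [c2_gt0 E2]] := gcf_equator_fiber hB gcf Phi_lines v0.
have same_fiber : Phi (unitv V) = Phi (unitv U).
  apply: (gcf_fiber_unitv (q := U) (c := - c1) gcf (sphere_unitv U0) _ V0).
  by rewrite E1 bivecC scalerN scaleNr.
have [al [be E]] : exists al be, vec (v *m B) 0 0 = al *: U + be *: V.
  apply: (bivec_span (c := c1 / c2) V0); apply: (scalerI (lt0r_neq0 c2_gt0)).
  by rewrite -E2 same_fiber E1 scalerA mulrCA divff ?mulr1 // lt0r_neq0.
move: E; rewrite !vecZ vecD !mulr0 addr0 => /vec_inj [-> _ _].
exact: comb_submx_col_mx.
Qed.
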